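(* Let $V$ be a braided vector space of diagonal type over a field $F$ of characteristic zero with basis $x_1,\dots,x_n$ and braiding $C(x_i\otimes x_j)=p_{i,j}x_j\otimes x_i$, and let $\mathfrak B(V)$ be its Nichols algebra. Then $\mathfrak L(V)=\mathfrak L(V)_R$ if and only if $p_{i,i}^2=1$ for all $i$ and, for all $1\le i\ne j\le n$, $p_{i,j}p_{j,i}=1$ and $p_{i,j}^3=1$. In this case $\mathfrak L(V)=\mathfrak L(V)_R=V$.
   Context: $\mathfrak B(V)=T(V)/\bigoplus_{m\ge2}\ker S_m$ is $\mathbb Z^n$-graded with $\deg x_i=e_i$; for homogeneous $u,v$ with $\deg u=\sum a_ie_i$, $\deg v=\sum b_je_j$ put $p_{u,v}=\prod p_{i,j}^{a_ib_j}$. $\mathfrak L(V)$ is the subspace of $\mathfrak B(V)$ generated by $V$ under the braided bracket $[u,v]=uv-p_{u,v}vu$ (for homogeneous $u,v$, extended bilinearly), i.e. the smallest subspace containing $V$ and closed under this bracket (the Nichols braided Lie algebra). $\mathfrak L(V)_R$ is the Lie subalgebra of $\mathfrak B(V)$ generated by $V$ under $[u,v]_R=p_{u,v}uv-p_{v,u}vu$. *)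

From HB Require Import structures.
From mathcomp Require Import all_boot all_order all_algebra all_fingroup.
Set Implicit Arguments. Unset Strict Implicit. Unset Printing Implicit Defensive.
Import Order.TTheory GRing.Theory.
Local Open Scope ring_scope.

Section Nichols.
Variables (F : fieldType) (n : nat) (p : 'I_n -> 'I_n -> F).

(* Words x_{w_1}...x_{w_m} form the basis of T(V); an element of T(V) is
   given by its coefficient function on words, with finite support. *)
Definition word := seq 'I_n.
Definition tens := word -> F.

(* finite support (there are finitely many words of each length) *)
Definition tfin (u : tens) := exists N : nat, forall w : word, (N < size w)%N -> u w = 0.

Definition tadd (u v : tens) : tens := fun w => u w + v w.
Definition topp (u : tens) : tens := fun w => - u w.
Definition tscale (a : F) (u : tens) : tens := fun w => a * u w.

Definition xgen (i : 'I_n) : tens := fun w => (w == [:: i])%:R.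

Definition pdeg (a b : word) : F :=
  \prod_(i < n) \prod_(j < n) p i j ^+ (count_mem i a * count_mem j b).

(* braided bracket [u,v] = uv - p_{u,v} vu on words, extended bilinearly *)
Definition brL (u v : tens) : tens := fun w =>
  \sum_(k < (size w).+1)
     (u (take k w) * v (drop k w)
      - pdeg (drop k w) (take k w) * (v (take k w) * u (drop k w))).

(* [u,v]_R = p_{u,v} uv - p_{v,u} vu on words, extended bilinearly *)
Definition brR (u v : tens) : tens := fun w =>
  \sum_(k < (size w).+1)
     (pdeg (take k w) (drop k w) * (u (take k w) * v (drop k w))
      - pdeg (take k w) (drop k w) * (v (take k w) * u (drop k w))).

(* Quantum symmetrizer S_m = sum_{s in S_m} T_s, where the braid lift T_s maps
   the word a = a_1..a_m to (prod_{i<j, s i > s j} p_{a_i,a_j}) times the word b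
   with b_{s i} = a_i.  symm u b is the coefficient of the word b in S_m(u_m),
   u_m the degree-m component of u, m = size b. *)
Definition symm (u : tens) (b : word) : F :=
  let t := in_tuple b in
  \sum_(s : 'S_(size b))
    (\prod_(i : 'I_(size b)) \prod_(j : 'I_(size b) | (i < j)%N && (s j < s i)%N)
        p (tnth t (s i)) (tnth t (s j)))
    * u [seq tnth t (s i) | i <- enum 'I_(size b)].

(* the ideal  (+)_{m>=2} ker S_m  of T(V) *)
Definition nideal (u : tens) : Prop :=
  tfin u /\ u [::] = 0 /\ (forall w : word, size w = 1%N -> u w = 0)
  /\ (forall b : word, (2 <= size b)%N -> symm u b = 0).

(* u lies in V + ideal, i.e. its class in B(V) lies in (the image of) V *)
Definition inVmod (u : tens) : Prop :=
  exists v : tens, (forall w : word, size w != 1%N -> v w = 0)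
                   /\ nideal (tadd u (topp v)).

(* Preimage in T(V) of L(V): smallest subspace of B(V) containing V and
   closed under the braided bracket (saturated under the ideal). *)
Inductive LT : tens -> Prop :=
| LT_gen i : LT (xgen i)
| LT_zero : LT (fun _ => 0)
| LT_add u v : LT u -> LT v -> LT (tadd u v)
| LT_scale a u : LT u -> LT (tscale a u)
| LT_br u v : LT u -> LT v -> LT (brL u v)
| LT_ideal u v : LT u -> nideal v -> LT (tadd u v).

(* Preimage in T(V) of L(V)_R *)
Inductive LRT : tens -> Prop :=
| LRT_gen i : LRT (xgen i)
| LRT_zero : LRT (fun _ => 0)
| LRT_add u v : LRT u -> LRT v -> LRT (tadd u v)
| LRT_scale a u : LRT u -> LRT (tscale a u)
| LRT_br u v : LRT u -> LRT v -> LRT (brR u v)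
| LRT_ideal u v : LRT u -> nideal v -> LRT (tadd u v).

End Nichols.

(* Let I be the ideal (+)_{m>=2} ker S_m, so that L(V) and L(V)_R are the images
   of subspaces of T(V) containing V + I.  The recursions of the quantum
   symmetrizer S_{m+1} through S_m at the first and at the last letter show that
   I is a two-sided ideal, even for products twisted by a scalar depending only
   on the degrees of the factors; both brackets are such twisted commutators, so
   modulo I the bracket of two elements of V + I is the bracket of their
   components in V.  When p_{i,j} p_{j,i} = 1 for all i, j, resp.
   p_{i,j} = p_{j,i}^2 for i <> j, S_2 kills [x_i, x_j], resp. [x_i, x_j]_R, so
   V + I is closed under both brackets and is the preimage of L(V) = L(V)_R.
   Conversely, a linear form on the span of x_i x_j and x_j x_i that vanishes
   on I and on one kind of bracket vanishes on the corresponding Lie algebra;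
   evaluating it on brackets of the other kind of generators forces
   p_{i,i}^2 = 1, p_{i,j} p_{j,i} = 1 and p_{i,j}^3 = 1. *)

From HB Require Import structures.
From mathcomp Require Import all_boot all_order all_algebra all_fingroup.
From mathcomp Require Import ring.
From Stdlib Require Import FunctionalExtensionality.
Set Implicit Arguments. Unset Strict Implicit. Unset Printing Implicit Defensive.
Import GRing.Theory.
Local Open Scope ring_scope.

Lemma ltn_lift m (r : 'I_m.+1) (a b : 'I_m) : (lift r a < lift r b)%N = (a < b)%N.
Proof. by rewrite /= !ltnNge leq_bump2. Qed.

Lemma widen_ord_lift_max m (k : 'I_m) : widen_ord (leqnSn m) k = lift ord_max k.
Proof. by apply: val_inj; rewrite /= /bump leqNgt ltn_ord. Qed.

Section UnliftPerm.
Variables (m : nat) (i : 'I_m.+1).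
Implicit Types (s : 'S_m.+1) (t : 'S_m) (k : 'I_m).

Definition unlift_perm_fun (s : 'S_m.+1) (k : 'I_m) : 'I_m :=
  odflt k (unlift (s i) (s (lift i k))).

Lemma lift_unlift_perm_fun s k : lift (s i) (unlift_perm_fun s k) = s (lift i k).
Proof.
have si_neq : s i != s (lift i k) by rewrite (inj_eq perm_inj) neq_lift.
by have [k' sk uk] := unlift_some si_neq; rewrite /unlift_perm_fun uk sk.
Qed.

Lemma unlift_perm_fun_inj s : injective (unlift_perm_fun s).
Proof.
move=> k k' /(congr1 (lift (s i))); rewrite !lift_unlift_perm_fun.
by move/perm_inj/lift_inj.
Qed.

Definition unlift_perm (s : 'S_m.+1) : 'S_m := perm (@unlift_perm_fun_inj s).

Lemma lift_unlift_perm s : lift_perm i (s i) (unlift_perm s) = s.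
Proof.
apply/permP => k; case: (unliftP i k) => [k'|] ->; last by rewrite lift_perm_id.
by rewrite lift_perm_lift permE lift_unlift_perm_fun.
Qed.

Lemma unlift_lift_perm j t : unlift_perm (lift_perm i j t) = t.
Proof.
apply/permP => k; apply: (@lift_inj _ j); rewrite [unlift_perm _ k]permE.
by rewrite -{1}(lift_perm_id i j t) lift_unlift_perm_fun lift_perm_lift.
Qed.

Lemma sum_lift_perm (R : nmodType) j (G : 'S_m.+1 -> R) :
  \sum_(s : 'S_m.+1 | s i == j) G s = \sum_(t : 'S_m) G (lift_perm i j t).
Proof.
rewrite (reindex (lift_perm i j)); last first.
  exists unlift_perm => [t _ | s /eqP <-]; first exact: unlift_lift_perm.
  exact: lift_unlift_perm.
by apply: eq_bigl => t; rewrite lift_perm_id eqxx.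
Qed.

Lemma sum_perm_lift (R : nmodType) (G : 'S_m.+1 -> R) :
  \sum_s G s = \sum_(r : 'I_m.+1) \sum_t G (lift_perm i r t).
Proof.
rewrite (partition_big (fun s : 'S_m.+1 => s i) xpredT) //=.
by apply: eq_bigr => r _; rewrite -sum_lift_perm.
Qed.

End UnliftPerm.

Section Symmetrizer.
Variables (F : fieldType) (n : nat) (p : 'I_n -> 'I_n -> F).
Local Notation tens := (tens F n).

Definition braid_coef m (t : m.-tuple 'I_n) (s : 'S_m) : F :=
  \prod_(i : 'I_m) \prod_(j : 'I_m | (i < j)%N && (s j < s i)%N)
     p (tnth t (s i)) (tnth t (s j)).

Definition perm_word m (t : m.-tuple 'I_n) (s : 'S_m) : word n :=
  [seq tnth t (s i) | i <- enum 'I_m].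

Definition qsym m (t : m.-tuple 'I_n) (u : tens) : F :=
  \sum_(s : 'S_m) braid_coef t s * u (perm_word t s).

Definition del_tnth m (t : m.+1.-tuple 'I_n) (r : 'I_m.+1) : m.-tuple 'I_n :=
  [tuple tnth t (lift r j) | j < m].

Lemma symmE u b : symm p u b = qsym (in_tuple b) u.
Proof. by []. Qed.

Lemma qsym_tuple m (t : m.-tuple 'I_n) u : qsym t u = symm p u t.
Proof.
case: t => s size_s; have /eqP size_sE := size_s; subst m.
by rewrite (_ : Tuple size_s = in_tuple s) //; apply: val_inj.
Qed.

Lemma perm_word_lift0 m (t : m.+1.-tuple 'I_n) r s :
  perm_word t (lift_perm ord0 r s) = tnth t r :: perm_word (del_tnth t r) s.
Proof.
rewrite /perm_word enum_ordSl /= lift_perm_id -map_comp; congr (_ :: _).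
by apply: eq_map => k /=; rewrite lift_perm_lift tnth_mktuple.
Qed.

Lemma braid_coef_lift0 m (t : m.+1.-tuple 'I_n) r s :
  braid_coef t (lift_perm ord0 r s) =
  (\prod_(x : 'I_m.+1 | (x < r)%N) p (tnth t r) (tnth t x)) *
  braid_coef (del_tnth t r) s.
Proof.
rewrite /braid_coef big_ord_recl lift_perm_id; congr (_ * _).
  rewrite [RHS](reindex_inj (@perm_inj _ (lift_perm ord0 r s))) /=.
  apply: eq_bigl => j; case: (unliftP ord0 j) => [j'|] ->.
    by rewrite lift_perm_lift.
  by rewrite lift_perm_id ltnn.
apply: eq_bigr => i _; rewrite big_mkcond big_ord_recl /= mul1r [RHS]big_mkcond /=.
apply: eq_bigr => j _; rewrite !lift_perm_lift ltn_lift !tnth_mktuple.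
by rewrite (_ : (bump 0 i < bump 0 j)%N = (i < j)%N).
Qed.

Lemma qsym_recl m (t : m.+1.-tuple 'I_n) u :
  qsym t u = \sum_(r : 'I_m.+1)
     (\prod_(x : 'I_m.+1 | (x < r)%N) p (tnth t r) (tnth t x)) *
     qsym (del_tnth t r) (fun w => u (tnth t r :: w)).
Proof.
rewrite /qsym (sum_perm_lift ord0); apply: eq_bigr => r _; rewrite mulr_sumr.
by apply: eq_bigr => s _; rewrite braid_coef_lift0 perm_word_lift0 mulrA.
Qed.

Lemma perm_word_liftmax m (t : m.+1.-tuple 'I_n) r s :
  perm_word t (lift_perm ord_max r s) = rcons (perm_word (del_tnth t r) s) (tnth t r).
Proof.
rewrite /perm_word enum_ordSr map_rcons lift_perm_id -map_comp; congr (rcons _ _).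
by apply: eq_map => k /=; rewrite widen_ord_lift_max lift_perm_lift tnth_mktuple.
Qed.

Lemma braid_coef_liftmax m (t : m.+1.-tuple 'I_n) r s :
  braid_coef t (lift_perm ord_max r s) =
  (\prod_(x : 'I_m.+1 | (r < x)%N) p (tnth t x) (tnth t r)) *
  braid_coef (del_tnth t r) s.
Proof.
rewrite /braid_coef big_ord_recr /= [X in _ * X]big_pred0; last first.
  by move=> j; rewrite ltnNge -ltnS ltn_ord.
rewrite mulr1 [X in X * _](reindex_inj (@perm_inj _ (lift_perm ord_max r s))) /=.
rewrite [X in X * _]big_mkcond big_ord_recr /= lift_perm_id ltnn mulr1 -big_split /=.
apply: eq_bigr => i _; rewrite widen_ord_lift_max lift_perm_lift.
rewrite big_mkcond big_ord_recr /= lift_perm_id ltn_ord /= mulrC.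
congr (_ * _); rewrite [RHS]big_mkcond /=.
apply: eq_bigr => j _; rewrite widen_ord_lift_max !lift_perm_lift !tnth_mktuple.
by rewrite (ltn_lift r (s j) (s i)).
Qed.

Lemma qsym_recr m (t : m.+1.-tuple 'I_n) u :
  qsym t u = \sum_(r : 'I_m.+1)
     (\prod_(x : 'I_m.+1 | (r < x)%N) p (tnth t x) (tnth t r)) *
     qsym (del_tnth t r) (fun w => u (rcons w (tnth t r))).
Proof.
rewrite /qsym (sum_perm_lift ord_max); apply: eq_bigr => r _; rewrite mulr_sumr.
by apply: eq_bigr => s _; rewrite braid_coef_liftmax perm_word_liftmax mulrA.
Qed.

Lemma size_perm_word m (t : m.-tuple 'I_n) s : size (perm_word t s) = m.
Proof. by rewrite size_map size_enum_ord. Qed.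

Lemma perm_eq_perm_word m (t : m.-tuple 'I_n) s : perm_eq (perm_word t s) t.
Proof.
rewrite -[X in perm_eq _ X]map_tnth_enum /perm_word (map_comp (tnth t) s) perm_map //.
apply: uniq_perm; [rewrite map_inj_uniq ?enum_uniq //; exact: perm_inj
                  | exact: enum_uniq | move=> x].
rewrite mem_enum; apply/mapP; exists (s^-1%g x); rewrite ?mem_enum //.
by rewrite permKV.
Qed.

Lemma qsym0 (t : 0.-tuple 'I_n) u : qsym t u = u [::].
Proof.
rewrite /qsym (big_pred1 (1%g : 'S_0)); last first.
  by move=> s; symmetry; apply/eqP/permP => -[].
have /size0nil -> := size_perm_word t 1%g.
by rewrite /braid_coef big_ord0 mul1r.
Qed.

Lemma qsym1 (t : 1.-tuple 'I_n) u : qsym t u = u [:: tnth t ord0].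
Proof. by rewrite qsym_recl big_ord1 big_pred0 // mul1r qsym0. Qed.

Lemma symm2 u x y : symm p u [:: x; y] = u [:: x; y] + p y x * u [:: y; x].
Proof.
rewrite -qsym_tuple qsym_recl !big_ord_recl big_ord0 addr0 !qsym1.
rewrite big_pred0 // mul1r (big_pred1 ord0) //; last by case=> -[|[|]].
by rewrite /del_tnth !tnth_mktuple /tnth.
Qed.

Lemma qsymD m (t : m.-tuple 'I_n) u v : qsym t (tadd u v) = qsym t u + qsym t v.
Proof. by rewrite /qsym -big_split; apply: eq_bigr => s _; rewrite /tadd mulrDr. Qed.

Lemma qsymM_perm_inv m (t : m.-tuple 'I_n) (g : word n -> F) u :
  (forall w w', perm_eq w w' -> g w = g w') ->
  qsym t (fun w => g w * u w) = g t * qsym t u.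
Proof.
move=> g_perm; rewrite /qsym mulr_sumr; apply: eq_bigr => s _.
by rewrite (g_perm _ t) ?perm_eq_perm_word // mulrCA.
Qed.

End Symmetrizer.

Local Notation tsub u v := (tadd u (topp v)).

Ltac tens_ring := apply: functional_extensionality => ?; cbv beta delta [tadd topp tscale]; ring.

Section Ideal.
Variables (F : fieldType) (n : nat) (p : 'I_n -> 'I_n -> F).
Local Notation tens := (tens F n).
Local Notation word := (word n).
Local Notation nideal := (nideal p).
Implicit Types (u v : tens) (g : word -> F).

Lemma nidealE u : nideal u <-> tfin u /\ forall b, symm p u b = 0.
Proof.
split=> [[u_fin [u0 [u1 u2]]] | [u_fin uS]].
  split=> // -[|a [|c b]]; rewrite symmE ?qsym0 ?qsym1 //; first exact: u1.
  by rewrite -symmE; apply: u2.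
do !split=> //; first by rewrite -(uS [::]) symmE qsym0.
by case=> [|a [|]] //= _; rewrite -(uS [:: a]) symmE qsym1.
Qed.

Lemma tfinD u v : tfin u -> tfin v -> tfin (tadd u v).
Proof.
case=> N uN [M vM]; exists (maxn N M) => w; rewrite gtn_max => /andP[wN wM].
by rewrite /tadd uN ?vM ?addr0.
Qed.

Lemma tfin_family (H : 'I_n -> tens) :
  (forall a, tfin (H a)) -> exists N, forall a w, (N < size w)%N -> H a w = 0.
Proof.
move=> /fin_all_exists[N HN]; exists (\max_a N a) => a w Nw.
by apply: HN; apply: leq_ltn_trans Nw; apply: leq_bigmax.
Qed.

Lemma nideal0 : nideal (fun _ => 0).
Proof.
apply/nidealE; split=> [|b]; first by exists 0%N.
by rewrite symmE; apply: big1 => s _; rewrite mulr0.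
Qed.

Lemma nidealD u v : nideal u -> nideal v -> nideal (tadd u v).
Proof.
move=> /nidealE[u_fin uS] /nidealE[v_fin vS]; apply/nidealE; split.
  exact: tfinD.
by move=> b; rewrite symmE qsymD -!symmE uS vS addr0.
Qed.

Lemma nidealM_perm_inv g u : (forall w w', perm_eq w w' -> g w = g w') ->
  nideal u -> nideal (fun w => g w * u w).
Proof.
move=> g_perm /nidealE[[N uN] uS]; apply/nidealE; split.
  by exists N => w Nw; rewrite uN ?mulr0.
by move=> b; rewrite symmE qsymM_perm_inv // -symmE uS mulr0.
Qed.

Lemma nidealZ a u : nideal u -> nideal (tscale a u).
Proof. exact: (@nidealM_perm_inv (fun _ => a)). Qed.

Lemma nidealN u : nideal u -> nideal (topp u).
Proof.
move=> /(nidealZ (-1)); congr nideal.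
by apply: functional_extensionality => w; rewrite /tscale /topp mulN1r.
Qed.

(* [consT H] and [rconsT H] are the tensors sum_a x_a H_a and sum_a H_a x_a. *)
Definition consT (H : 'I_n -> tens) : tens :=
  fun w => if w is a :: w' then H a w' else 0.

Definition rconsT (H : 'I_n -> tens) : tens :=
  fun w => if rev w is a :: r then H a (rev r) else 0.

Lemma rconsT_rcons H w a : rconsT H (rcons w a) = H a w.
Proof. by rewrite /rconsT rev_rcons revK. Qed.

Lemma nideal_consT H : (forall a, nideal (H a)) -> nideal (consT H).
Proof.
move=> HI; apply/nidealE; split.
  have [N HN] := tfin_family (fun a => proj1 (HI a)).
  by exists N.+1 => -[|a w] //= Nw; apply: HN.
case=> [|x b]; first by rewrite symmE qsym0.
rewrite symmE qsym_recl; apply: big1 => r _; set a := tnth _ r.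
by rewrite qsym_tuple; have /nidealE[_ ->] := HI a; rewrite mulr0.
Qed.

Lemma nideal_rconsT H : (forall a, nideal (H a)) -> nideal (rconsT H).
Proof.
move=> HI; apply/nidealE; split.
  have [N HN] := tfin_family (fun a => proj1 (HI a)).
  exists N.+1 => w; case/lastP: w => [|w a] //.
  by rewrite rconsT_rcons size_rcons; apply: HN.
case/lastP=> [|b x]; first by rewrite symmE qsym0.
have size_bx : size (rcons b x) == (size b).+1 by rewrite size_rcons.
rewrite -(qsym_tuple p (Tuple size_bx)) qsym_recr; apply: big1 => r _.
set a := tnth _ r; rewrite (_ : (fun w => rconsT H (rcons w a)) = H a); last first.
  by apply: functional_extensionality => w; rewrite rconsT_rcons.
by rewrite qsym_tuple; have /nidealE[_ ->] := HI a; rewrite mulr0.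
Qed.

End Ideal.

Section TwistedProduct.
Variables (F : fieldType) (n : nat) (p : 'I_n -> 'I_n -> F).
Local Notation tens := (tens F n).
Local Notation word := (word n).
Local Notation nideal := (nideal p).
Implicit Types (u v a b : tens) (f : word -> word -> F) (c : 'I_n).

Definition tmul f u v : tens := fun w =>
  \sum_(k < (size w).+1) f (take k w) (drop k w) * (u (take k w) * v (drop k w)).

Definition degree_invariant f :=
  forall x x' y y', perm_eq x x' -> perm_eq y y' -> f x y = f x' y'.

Lemma nideal_tmul_boundedl N u v f : (forall w, (N <= size w)%N -> u w = 0) ->
  nideal v -> degree_invariant f -> nideal (tmul f u v).
Proof.
elim: N u f => [|N IH] u f uN vI f_inv.
  rewrite (_ : tmul f u v = fun _ => 0); first exact: nideal0.
  by apply: functional_extensionality => w; apply: big1 => k _; rewrite uN ?mul0r ?mulr0.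
rewrite (_ : tmul f u v = tadd (fun w => f [::] w * u [::] * v w)
    (consT (fun c => tmul (fun x y => f (c :: x) y) (fun w => u (c :: w)) v))).
  apply: nidealD.
    by apply: nidealM_perm_inv => // w w' ww'; rewrite (f_inv _ _ _ w' (perm_refl _) ww').
  apply: nideal_consT => c; apply: IH => //; first by move=> w Nw; apply: uN.
  by move=> x x' y y' xx' yy'; apply: f_inv; rewrite ?perm_cons.
apply: functional_extensionality => -[|c w]; rewrite /tmul /tadd /= big_ord_recl /=.
  by rewrite big_ord0 !addr0 mulrA.
by rewrite mulrA.
Qed.

Lemma nideal_tmul_boundedr N u v f : (forall w, (N <= size w)%N -> v w = 0) ->
  nideal u -> degree_invariant f -> nideal (tmul f u v).
Proof.
elim: N v f => [|N IH] v f vN uI f_inv.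
  rewrite (_ : tmul f u v = fun _ => 0); first exact: nideal0.
  by apply: functional_extensionality => w; apply: big1 => k _; rewrite vN ?mulr0.
rewrite (_ : tmul f u v = tadd (fun w => f w [::] * v [::] * u w)
    (rconsT (fun c => tmul (fun x y => f x (rcons y c)) u (fun w => v (rcons w c))))).
  apply: nidealD.
    by apply: nidealM_perm_inv => // w w' ww'; rewrite (f_inv _ w' _ _ ww' (perm_refl _)).
  apply: nideal_rconsT => c; apply: IH => //.
    by move=> w Nw; apply: vN; rewrite size_rcons.
  by move=> x x' y y' xx' yy'; apply: f_inv; rewrite // -!cats1 perm_cat2r.
apply: functional_extensionality => w; case/lastP: w => [|w c].
  by rewrite /tmul /tadd /= big_ord1 /= addr0 mulrAC mulrA.
rewrite /tmul /tadd rconsT_rcons size_rcons big_ord_recr /= addrC.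
rewrite take_oversize ?drop_oversize ?size_rcons // mulrAC mulrA; congr (_ + _).
apply: eq_bigr => i _ /=; have i_le : (i <= size w)%N by rewrite -ltnS.
by rewrite drop_rcons // -cats1 takel_cat.
Qed.

Lemma tfin_bounded u : tfin u -> exists N, forall w, (N <= size w)%N -> u w = 0.
Proof. by case=> N uN; exists N.+1. Qed.

Lemma tmul_mod f u v a b : degree_invariant f -> tfin a -> tfin b ->
  nideal (tsub u a) -> nideal (tsub v b) -> nideal (tsub (tmul f u v) (tmul f a b)).
Proof.
move=> f_inv a_fin b_fin uaI vbI.
have [Na aN] := tfin_bounded a_fin.
have [Nv vN] := tfin_bounded (tfinD b_fin (proj1 vbI)).
rewrite (_ : tsub _ _ = tadd (tmul f a (tsub v b)) (tmul f (tsub u a) (tadd b (tsub v b)))).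
  by apply: nidealD; [apply: nideal_tmul_boundedl aN _ _ | apply: nideal_tmul_boundedr vN _ _].
apply: functional_extensionality => w.
rewrite /tadd /topp /tmul -sumrN -!big_split; apply: eq_bigr => k _ /=; ring.
Qed.

End TwistedProduct.

Section Brackets.
Variables (F : fieldType) (n : nat) (p : 'I_n -> 'I_n -> F).
Local Notation tens := (tens F n).
Local Notation word := (word n).
Local Notation nideal := (nideal p).
Local Notation tmul := (@tmul F n).
Implicit Types (u v a b : tens) (f g : word -> word -> F).

Lemma degree_invariant_pdeg : degree_invariant (pdeg p).
Proof.
move=> x x' y y' /seq.permP xx' /seq.permP yy'.
by apply: eq_bigr => i _; apply: eq_bigr => j _; rewrite xx' yy'.
Qed.

Lemma pdeg0 : pdeg p [::] [::] = 1.
Proof. by rewrite /pdeg big1 // => i _; rewrite big1. Qed.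

Lemma pdeg1 x y : pdeg p [:: x] [:: y] = p x y.
Proof.
rewrite /pdeg (bigD1 x) //= [X in _ * X]big1 ?mulr1; last first.
  by move=> i /negbTE xi; apply: big1 => j _; rewrite /= eq_sym xi mul0n expr0.
rewrite (bigD1 y) //= [X in _ * X]big1 ?mulr1; last first.
  by move=> j /negbTE yj; rewrite /= eq_sym yj muln0 expr0.
by rewrite !eqxx expr1.
Qed.

Lemma brL_tmul u v :
  brL p u v = tsub (tmul (fun _ _ => 1) u v) (tmul (fun x y => pdeg p y x) v u).
Proof.
apply: functional_extensionality => w.
by rewrite /brL /tmul /tadd /topp -sumrN -big_split; apply: eq_bigr => k _; rewrite mul1r.
Qed.

Lemma brR_tmul u v : brR p u v = tsub (tmul (pdeg p) u v) (tmul (pdeg p) v u).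
Proof.
apply: functional_extensionality => w.
by rewrite /brR /tmul /tadd /topp -sumrN -big_split.
Qed.

Lemma tmul_commutator_mod f g u v a b :
  degree_invariant f -> degree_invariant g -> tfin a -> tfin b ->
  nideal (tsub u a) -> nideal (tsub v b) ->
  nideal (tsub (tsub (tmul f u v) (tmul g v u)) (tsub (tmul f a b) (tmul g b a))).
Proof.
move=> f_inv g_inv a_fin b_fin uaI vbI.
rewrite (_ : tsub _ _ =
  tsub (tsub (tmul f u v) (tmul f a b)) (tsub (tmul g v u) (tmul g b a))); last first.
  by tens_ring.
by apply: nidealD; last apply: nidealN; apply: tmul_mod.
Qed.

Lemma brL_mod u v a b : tfin a -> tfin b ->
  nideal (tsub u a) -> nideal (tsub v b) -> nideal (tsub (brL p u v) (brL p a b)).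
Proof.
rewrite !brL_tmul; apply: tmul_commutator_mod => // x x' y y' xx' yy'.
exact: degree_invariant_pdeg.
Qed.

Lemma brR_mod u v a b : tfin a -> tfin b ->
  nideal (tsub u a) -> nideal (tsub v b) -> nideal (tsub (brR p u v) (brR p a b)).
Proof. by rewrite !brR_tmul; apply: tmul_commutator_mod; apply: degree_invariant_pdeg. Qed.

Lemma brL_nil u v : brL p u v [::] = 0.
Proof. by rewrite /brL big_ord1 /= pdeg0; ring. Qed.

Lemma brR_nil u v : brR p u v [::] = 0.
Proof. by rewrite /brR big_ord1 /=; ring. Qed.

Lemma brL2 u v x y : u [::] = 0 -> v [::] = 0 ->
  brL p u v [:: x; y] = u [:: x] * v [:: y] - p y x * (v [:: x] * u [:: y]).
Proof.
by move=> u0 v0; rewrite /brL /= !big_ord_recl big_ord0 /= u0 v0 pdeg1; ring.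
Qed.

Lemma brR2 u v x y : u [::] = 0 -> v [::] = 0 ->
  brR p u v [:: x; y] = p x y * (u [:: x] * v [:: y]) - p x y * (v [:: x] * u [:: y]).
Proof.
by move=> u0 v0; rewrite /brR /= !big_ord_recl big_ord0 /= u0 v0 pdeg1; ring.
Qed.

End Brackets.

Section Sufficiency.
Variables (F : fieldType) (n : nat) (p : 'I_n -> 'I_n -> F).
Local Notation tens := (tens F n).
Local Notation word := (word n).
Local Notation nideal := (nideal p).
Local Notation x_ i := (@xgen F n i).
Implicit Types (u v a b : tens) (P : tens -> Prop).

Definition deg1 u := forall w : word, size w != 1%N -> u w = 0.

Lemma deg1_tfin a : deg1 a -> tfin a.
Proof. by move=> a1; exists 1%N => w w_gt1; apply: a1; rewrite neq_ltn w_gt1 orbT. Qed.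

Lemma deg1_nil a : deg1 a -> a [::] = 0.
Proof. by apply. Qed.

Lemma deg1_xgen i : deg1 (x_ i).
Proof. by move=> w w_neq1; rewrite /xgen; case: eqP => // w_i; rewrite w_i in w_neq1. Qed.

Lemma xgen1 i j : x_ i [:: j] = (j == i)%:R.
Proof. by rewrite /xgen eqseq_cons andbT. Qed.

Lemma deg1_mul_split a b (w : word) k : deg1 a -> deg1 b -> size w != 2%N ->
  a (take k w) * b (drop k w) = 0.
Proof.
move=> a1 b1 w_neq2.
have [take1 | take_neq1] := eqVneq (size (take k w)) 1%N; last by rewrite a1 ?mul0r.
rewrite b1 ?mulr0 //; apply: contra w_neq2 => /eqP drop1.
by rewrite -(cat_take_drop k w) size_cat take1 drop1.
Qed.

Lemma nideal_deg2 u : tfin u ->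
  (forall w : word, size w != 2%N -> u w = 0) ->
  (forall x y, u [:: x; y] + p y x * u [:: y; x] = 0) -> nideal u.
Proof.
move=> u_fin u2 u_symm; apply/nidealE; split=> // w.
have [w2 | w_neq2] := eqVneq (size w) 2%N; last first.
  by rewrite symmE; apply: big1 => s _; rewrite u2 ?size_perm_word // mulr0.
by case: w w2 => [|x [|y []]] // _; rewrite symm2.
Qed.

Lemma nideal_brL_deg1 a b : (forall x y, p x y * p y x = 1) ->
  deg1 a -> deg1 b -> nideal (brL p a b).
Proof.
move=> pp a1 b1; apply: nideal_deg2.
- exists 2%N => w w_gt2; apply: big1 => k _.
  by rewrite !deg1_mul_split ?mulr0 ?subrr // neq_ltn w_gt2 orbT.
- by move=> w w_neq2; apply: big1 => k _; rewrite !deg1_mul_split ?mulr0 ?subrr.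
move=> x y; rewrite !brL2 ?deg1_nil //.
transitivity (a [:: x] * b [:: y] * (1 - p y x * p x y)); first by ring.
by rewrite pp subrr mulr0.
Qed.

Lemma nideal_brR_deg1 a b : (forall x y, x != y -> p x y = p y x ^+ 2) ->
  deg1 a -> deg1 b -> nideal (brR p a b).
Proof.
move=> p_sq a1 b1; apply: nideal_deg2.
- exists 2%N => w w_gt2; apply: big1 => k _.
  by rewrite !deg1_mul_split ?mulr0 ?subrr // neq_ltn w_gt2 orbT.
- by move=> w w_neq2; apply: big1 => k _; rewrite !deg1_mul_split ?mulr0 ?subrr.
move=> x y; rewrite !brR2 ?deg1_nil //; have [<- | xy] := eqVneq x y; first by ring.
transitivity ((a [:: x] * b [:: y] - b [:: x] * a [:: y]) * (p x y - p y x ^+ 2)).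
  by ring.
by rewrite p_sq // subrr mulr0.
Qed.

(* Preimages in T(V) of the subspaces of B(V) that contain V. *)
Definition VI_closed P :=
  [/\ forall i, P (x_ i), P (fun _ => 0), (forall u v, P u -> P v -> P (tadd u v)),
      (forall c u, P u -> P (tscale c u)) & (forall u v, P u -> nideal v -> P (tadd u v))].

Lemma LT_VI_closed : VI_closed (LT p).
Proof. by split; [exact: LT_gen | exact: LT_zero | exact: LT_add | exact: LT_scale | exact: LT_ideal]. Qed.

Lemma LRT_VI_closed : VI_closed (LRT p).
Proof.
by split; [exact: LRT_gen | exact: LRT_zero | exact: LRT_add | exact: LRT_scale | exact: LRT_ideal].
Qed.

Lemma LT_min P : VI_closed P -> (forall u v, P u -> P v -> P (brL p u v)) ->
  forall u, LT p u -> P u.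
Proof. by case=> Pgen P0 PD PZ PI Pbr u; elim=> *; auto. Qed.

Lemma LRT_min P : VI_closed P -> (forall u v, P u -> P v -> P (brR p u v)) ->
  forall u, LRT p u -> P u.
Proof. by case=> Pgen P0 PD PZ PI Pbr u; elim=> *; auto. Qed.

Lemma deg1E a : deg1 a -> a = fun w => \sum_(i < n) a [:: i] * x_ i w.
Proof.
move=> a1; apply: functional_extensionality => w.
have [w1 | w_neq1] := eqVneq (size w) 1%N; last first.
  by rewrite a1 // big1 // => i _; rewrite deg1_xgen ?mulr0.
case: w w1 => [|c []] // _; rewrite (bigD1 c) //= xgen1 eqxx mulr1 big1 ?addr0 //.
by move=> i /negbTE ic; rewrite xgen1 eq_sym ic mulr0.
Qed.

Lemma VI_closed_deg1 P a : VI_closed P -> deg1 a -> P a.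
Proof.
case=> Pgen P0 PD PZ _ /deg1E ->.
suff Psum s : P (fun w => \sum_(i <- s) a [:: i] * x_ i w) by exact: Psum.
elim: s => [|i s Ps].
  by rewrite (_ : (fun _ => _) = fun _ => 0) //; apply: functional_extensionality => w; rewrite big_nil.
rewrite (_ : (fun _ => _) = tadd (tscale (a [:: i]) (x_ i)) (fun w => \sum_(j <- s) a [:: j] * x_ j w)).
  by apply: PD => //; apply: PZ.
by apply: functional_extensionality => w; rewrite big_cons.
Qed.

Lemma VI_closed_inVmod P u : VI_closed P -> inVmod p u -> P u.
Proof.
move=> PVI [a [a1 uaI]]; rewrite (_ : u = tadd a (tsub u a)); last by tens_ring.
by have [_ _ _ _ PI] := PVI; apply: PI => //; apply: VI_closed_deg1 PVI a1.
Qed.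

Lemma inVmod_VI_closed : VI_closed (inVmod p).
Proof.
split.
- move=> i; exists (x_ i); split; first exact: deg1_xgen.
  by rewrite (_ : tsub _ _ = fun _ => 0); [exact: nideal0 | tens_ring].
- exists (fun _ => 0); split=> //.
  by rewrite (_ : tsub _ _ = fun _ => 0); [exact: nideal0 | tens_ring].
- move=> u v [a [a1 uaI]] [b [b1 vbI]]; exists (tadd a b); split.
    by move=> w w_neq1; rewrite /tadd a1 ?b1 ?addr0.
  by rewrite (_ : tsub _ _ = tadd (tsub u a) (tsub v b)); [exact: nidealD | tens_ring].
- move=> c u [a [a1 uaI]]; exists (tscale c a); split.
    by move=> w w_neq1; rewrite /tscale a1 ?mulr0.
  by rewrite (_ : tsub _ _ = tscale c (tsub u a)); [exact: nidealZ | tens_ring].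
move=> u v [a [a1 uaI]] vI; exists a; split=> //.
by rewrite (_ : tsub _ _ = tadd (tsub u a) v); [exact: nidealD | tens_ring].
Qed.

Lemma inVmod_brL u v : (forall x y, p x y * p y x = 1) ->
  inVmod p u -> inVmod p v -> inVmod p (brL p u v).
Proof.
move=> pp [a [a1 uaI]] [b [b1 vbI]]; exists (fun _ => 0); split=> //.
have abI := nideal_brL_deg1 pp a1 b1.
have := nidealD (brL_mod (deg1_tfin a1) (deg1_tfin b1) uaI vbI) abI.
by congr nideal; tens_ring.
Qed.

Lemma inVmod_brR u v : (forall x y, x != y -> p x y = p y x ^+ 2) ->
  inVmod p u -> inVmod p v -> inVmod p (brR p u v).
Proof.
move=> p_sq [a [a1 uaI]] [b [b1 vbI]]; exists (fun _ => 0); split=> //.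
have abI := nideal_brR_deg1 p_sq a1 b1.
have := nidealD (brR_mod (deg1_tfin a1) (deg1_tfin b1) uaI vbI) abI.
by congr nideal; tens_ring.
Qed.

End Sufficiency.

Section Necessity.
Variables (F : fieldType) (n : nat) (p : 'I_n -> 'I_n -> F).
Local Notation tens := (tens F n).
Local Notation nideal := (nideal p).
Local Notation x_ i := (@xgen F n i).
Implicit Types (u v : tens) (i j x y : 'I_n).

Definition deg2_kernel (al be : F) i j u :=
  u [::] = 0 /\ al * u [:: i; j] + be * u [:: j; i] = 0.

Lemma VI_closed_deg2_kernel al be i j :
  (forall v, nideal v -> al * v [:: i; j] + be * v [:: j; i] = 0) ->
  VI_closed p (deg2_kernel al be i j).
Proof.
move=> kerI; split.
- by move=> k; split=> //; rewrite !deg1_xgen // !mulr0 addr0.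
- by split=> //; rewrite !mulr0 addr0.
- move=> u v [u0 uk] [v0 vk]; split; first by rewrite /tadd u0 v0 addr0.
  by rewrite /tadd !mulrDr addrACA uk vk addr0.
- move=> c u [u0 uk]; split; first by rewrite /tscale u0 mulr0.
  by rewrite /tscale mulrCA [be * _]mulrCA -mulrDr uk mulr0.
move=> u v [u0 uk] vI; split; first by rewrite /tadd u0 (proj1 (proj2 vI)) addr0.
by rewrite /tadd !mulrDr addrACA uk kerI // addr0.
Qed.

Lemma LT_deg2_kernel al be i j :
  (forall v, nideal v -> al * v [:: i; j] + be * v [:: j; i] = 0) ->
  (forall u v, u [::] = 0 -> v [::] = 0 ->
     al * brL p u v [:: i; j] + be * brL p u v [:: j; i] = 0) ->
  forall u, LT p u -> deg2_kernel al be i j u.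
Proof.
move=> kerI kerbr; apply: LT_min (VI_closed_deg2_kernel kerI) _.
by move=> u v [u0 _] [v0 _]; split; [exact: brL_nil | exact: kerbr].
Qed.

Lemma LRT_deg2_kernel al be i j :
  (forall v, nideal v -> al * v [:: i; j] + be * v [:: j; i] = 0) ->
  (forall u v, u [::] = 0 -> v [::] = 0 ->
     al * brR p u v [:: i; j] + be * brR p u v [:: j; i] = 0) ->
  forall u, LRT p u -> deg2_kernel al be i j u.
Proof.
move=> kerI kerbr; apply: LRT_min (VI_closed_deg2_kernel kerI) _.
by move=> u v [u0 _] [v0 _]; split; [exact: brR_nil | exact: kerbr].
Qed.

Lemma nideal_symm2 v x y : nideal v -> v [:: x; y] + p y x * v [:: y; x] = 0.
Proof. by move=> /nidealE[_ vS]; rewrite -symm2. Qed.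

Lemma nideal_deg2_vanish v x y : nideal v -> p x y * p y x != 1 -> v [:: x; y] = 0.
Proof.
move=> vI pp_neq1.
have : v [:: x; y] * (1 - p y x * p x y) = 0.
  transitivity (v [:: x; y] + p y x * v [:: y; x]
                - p y x * (v [:: y; x] + p x y * v [:: x; y])); first by ring.
  by rewrite !nideal_symm2 // mulr0 subrr.
by move/eqP; rewrite mulf_eq0 subr_eq0 [1 == _]eq_sym [p y x * _]mulrC (negbTE pp_neq1) orbF => /eqP.
Qed.

Lemma brL_xgen2 i j x y :
  brL p (x_ i) (x_ j) [:: x; y] = (x == i)%:R * (y == j)%:R - p y x * ((x == j)%:R * (y == i)%:R).
Proof. by rewrite brL2 // !xgen1. Qed.

Lemma brR_xgen2 i j x y :
  brR p (x_ i) (x_ j) [:: x; y] =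
  p x y * ((x == i)%:R * (y == j)%:R) - p x y * ((x == j)%:R * (y == i)%:R).
Proof. by rewrite brR2 // !xgen1. Qed.

Lemma sqr_p_diag_of_LT_sub_LRT i : (forall u, LT p u -> LRT p u) -> p i i ^+ 2 = 1.
Proof.
move=> LT_LRT; have [// | pii2_neq1] := eqVneq (p i i ^+ 2) 1.
have kerI v : nideal v -> 1 * v [:: i; i] + 0 * v [:: i; i] = 0.
  by move=> vI; rewrite (nideal_deg2_vanish vI) ?mulr0 ?addr0 // -expr2.
have kerbr u v : u [::] = 0 -> v [::] = 0 ->
    1 * brR p u v [:: i; i] + 0 * brR p u v [:: i; i] = 0.
  by move=> u0 v0; rewrite brR2 //; ring.
have [_] := LRT_deg2_kernel kerI kerbr (LT_LRT _ (LT_br (LT_gen _ i) (LT_gen _ i))).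
rewrite brL_xgen2 eqxx /= => e.
have pii : 1 = p i i by apply/eqP; rewrite -subr_eq0 -[X in _ == X]e; apply/eqP; ring.
by rewrite -pii expr1n eqxx in pii2_neq1.
Qed.

Lemma mul_p_swap_of_LT_sub_LRT i j : (forall u, LT p u -> LRT p u) ->
  p i j != 0 -> i != j -> p i j * p j i = 1.
Proof.
move=> LT_LRT pij_neq0 ij; have [// | pp_neq1] := eqVneq (p i j * p j i) 1.
have pp_neq1' : p j i * p i j != 1 by rewrite mulrC.
have kerI v : nideal v -> p j i * v [:: i; j] + p i j * v [:: j; i] = 0.
  by move=> vI; rewrite !(nideal_deg2_vanish vI) // !mulr0 addr0.
have kerbr u v : u [::] = 0 -> v [::] = 0 ->
    p j i * brR p u v [:: i; j] + p i j * brR p u v [:: j; i] = 0.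
  by move=> u0 v0; rewrite !brR2 //; ring.
have kernel_brL k l := LRT_deg2_kernel kerI kerbr (LT_LRT _ (LT_br (LT_gen _ k) (LT_gen _ l))).
have [_ e_ij] := kernel_brL i j; have [_ e_ji] := kernel_brL j i.
rewrite !brL_xgen2 !eqxx [j == i]eq_sym (negbTE ij) /= in e_ij e_ji.
have pji : p j i = p i j ^+ 2.
  by apply/eqP; rewrite -subr_eq0 -[X in _ == X]e_ij; apply/eqP; ring.
have pij : p i j = p j i ^+ 2.
  by apply/eqP; rewrite -subr_eq0 -[X in _ == X]e_ji; apply/eqP; ring.
have pij3 : p i j ^+ 3 = 1.
  have : p i j * (p i j ^+ 3 - 1) = 0.
    transitivity ((p i j ^+ 2) ^+ 2 - p i j); first by ring.
    by rewrite -pji -pij subrr.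
  by move/eqP; rewrite mulf_eq0 (negbTE pij_neq0) subr_eq0 => /eqP.
by rewrite pji -exprS pij3 eqxx in pp_neq1.
Qed.

Lemma cube_p_of_LRT_sub_LT i j : (forall u, LRT p u -> LT p u) ->
  i != j -> p i j * p j i = 1 -> p i j ^+ 3 = 1.
Proof.
move=> LRT_LT ij pp.
have kerI v : nideal v -> 1 * v [:: i; j] + p j i * v [:: j; i] = 0.
  by move=> vI; rewrite mul1r nideal_symm2.
have kerbr u v : u [::] = 0 -> v [::] = 0 ->
    1 * brL p u v [:: i; j] + p j i * brL p u v [:: j; i] = 0.
  move=> u0 v0; rewrite !brL2 //.
  transitivity (u [:: i] * v [:: j] * (1 - p j i * p i j)); first by ring.
  by rewrite [p j i * _]mulrC pp subrr mulr0.
have [_] := LT_deg2_kernel kerI kerbr (LRT_LT _ (LRT_br (LRT_gen _ i) (LRT_gen _ j))).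
rewrite !brR_xgen2 !eqxx [j == i]eq_sym (negbTE ij) /= => e.
have pij : p i j = p j i ^+ 2.
  by apply/eqP; rewrite -subr_eq0 -[X in _ == X]e; apply/eqP; ring.
by rewrite -(expr1n _ 2) -pp exprMn -pij -exprSr.
Qed.

End Necessity.

Section Criterion.
Variables (F : fieldType) (n : nat) (p : 'I_n -> 'I_n -> F).

Definition LR_condition :=
  (forall i, p i i ^+ 2 = 1) /\
  (forall i j, i != j -> p i j * p j i = 1 /\ p i j ^+ 3 = 1).

Hypothesis LRc : LR_condition.

Lemma LR_condition_mul_swap x y : p x y * p y x = 1.
Proof.
have [<- | xy] := eqVneq x y; first by rewrite -expr2 (proj1 LRc).
by have [] := proj2 LRc x y xy.
Qed.

Lemma LR_condition_sqr x y : x != y -> p x y = p y x ^+ 2.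
Proof.
move=> xy; have yx : y != x by rewrite eq_sym.
have [pp p3] := proj2 LRc y x yx.
by rewrite -[LHS]mulr1 -p3 exprS mulrA [p x y * _]mulrC pp mul1r.
Qed.

Lemma LT_inVmod u : LT p u <-> inVmod p u.
Proof.
split; last exact: VI_closed_inVmod (LT_VI_closed p).
move: u; apply: LT_min (inVmod_VI_closed p) _ => u v.
exact: inVmod_brL LR_condition_mul_swap.
Qed.

Lemma LRT_inVmod u : LRT p u <-> inVmod p u.
Proof.
split; last exact: VI_closed_inVmod (LRT_VI_closed p).
move: u; apply: LRT_min (inVmod_VI_closed p) _ => u v.
exact: inVmod_brR LR_condition_sqr.
Qed.

End Criterion.

Lemma LR_condition_of_LT_eq_LRT (F : fieldType) (n : nat) (p : 'I_n -> 'I_n -> F) :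
  (forall i j, p i j != 0) -> (forall u, LT p u <-> LRT p u) -> LR_condition p.
Proof.
move=> p_neq0 LT_LRT; split=> [i | i j ij].
  by apply: sqr_p_diag_of_LT_sub_LRT => u /LT_LRT.
have pp : p i j * p j i = 1 by apply: mul_p_swap_of_LT_sub_LRT => // u /LT_LRT.
by split=> //; apply: cube_p_of_LRT_sub_LT => // u /LT_LRT.
Qed.

Theorem proposition5p1 (F : fieldType) (Hchar : [pchar F] =i pred0)
  (n : nat) (p : 'I_n -> 'I_n -> F) (Hp : forall i j, p i j != 0) :
  ((forall u : tens F n, LT p u <-> LRT p u) <->
   ((forall i, p i i ^+ 2 = 1) /\
    (forall i j, i != j -> p i j * p j i = 1 /\ p i j ^+ 3 = 1)))
  /\
  ((forall u : tens F n, LT p u <-> LRT p u) ->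
   (forall u : tens F n, LT p u <-> inVmod p u) /\
   (forall u : tens F n, LRT p u <-> inVmod p u)).
Proof.
have LR_sound (c : LR_condition p) :
    (forall u, LT p u <-> inVmod p u) /\ (forall u, LRT p u <-> inVmod p u).
  by split=> u; [exact: LT_inVmod | exact: LRT_inVmod].
have LR_complete LT_LRT : LR_condition p := LR_condition_of_LT_eq_LRT Hp LT_LRT.
split; last by move=> LT_LRT; apply: LR_sound; apply: LR_complete.
split; first exact: LR_complete.
move=> /LR_sound[LT_V LRT_V] u.
exact: iff_trans (LT_V u) (iff_sym (LRT_V u)).
Qed.
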